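(* Let $\mathbf{T}^{\mathrm{CoR}}_{\le 0}$ be the set of CoR terms containing no variables. Then $\mathbf{T}^{\mathrm{CoR}}_{\le 0}/{\sim_{\mathrm{REL}_{\ge 3}}} = \{[\bot], [\top], [\mathrm{I}], [\mathrm{D}]\}$, where $[t]$ denotes the $\sim_{\mathrm{REL}_{\ge 3}}$-class of $t$.
   Context: Fix a non-empty finite set $V$ of variables. CoR terms are generated by $t ::= a \mid \bot \mid \top \mid t \cup t \mid t \cap t \mid t^{-} \mid \mathrm{I} \mid \mathrm{D} \mid t \cdot t \mid t \dagger t \mid t^{\pi}$, where $a \in V$ and $\pi$ ranges over all maps $\{1,2\}\to\{1,2\}$. A structure $M$ consists of a non-empty set $|M|$ and a binary relation $a^M\subseteq|M|^2$ for each $a\in V$. The interpretation $[\![t]\!]_M\subseteq|M|^2$: $[\![a]\!]_M=a^M$, $[\![\bot]\!]_M=\emptyset$, $[\![\top]\!]_M=|M|^2$, $\cup,\cap$ set-theoretic, $[\![t^-]\!]_M=|M|^2\setminus[\![t]\!]_M$, $[\![\mathrm{I}]\!]_M=\{(x,y):x=y\}$, $[\![\mathrm{D}]\!]_M=\{(x,y):x\ne y\}$, $R\cdot S=\{(x,y):\exists z,(x,z)\in R\wedge(z,y)\in S\}$, $R\dagger S=\{(x,y):\forall z,(x,z)\in R\vee(z,y)\in S\}$, $R^{\pi}=\{(x_1,x_2):(x_{\pi(1)},x_{\pi(2)})\in R\}$. $\mathrm{REL}_{\ge 3}$ is the class of structures with $|M|$ of cardinality at least $3$; $t\sim_{\mathrm{REL}_{\ge3}}s$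 iff $[\![t]\!]_M=[\![s]\!]_M$ for all $M\in\mathrm{REL}_{\ge 3}$. *)

From Stdlib Require Import List.

Inductive idx2 : Type := one | two.

Inductive term (V : Type) : Type :=
| Var  : V -> term V
| Bot  : term V
| Top  : term V
| Cup  : term V -> term V -> term V
| Cap  : term V -> term V -> term V
| Compl : term V -> term V
| Id   : term V
| Di   : term V
| Comp : term V -> term V -> term V
| Dag  : term V -> term V -> term V
| Perm : (idx2 -> idx2) -> term V -> term V.

Arguments Var {V} _.
Arguments Bot {V}.
Arguments Top {V}.
Arguments Cup {V} _ _.
Arguments Cap {V} _ _.
Arguments Compl {V} _.
Arguments Id {V}.
Arguments Di {V}.
Arguments Comp {V} _ _.
Arguments Dag {V} _ _.
Arguments Perm {V} _ _.

Record structure (V : Type) : Type := {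
  car : Type;
  car_inhabited : inhabited car;
  rel : V -> car -> car -> Prop
}.
Arguments car {V} _.
Arguments rel {V} _ _ _ _.

Definition pair_env {X : Type} (x1 x2 : X) (i : idx2) : X :=
  match i with one => x1 | two => x2 end.

Fixpoint interp {V : Type} (M : structure V) (t : term V) : car M -> car M -> Prop :=
  match t with
  | Var a => rel M a
  | Bot => fun _ _ => False
  | Top => fun _ _ => True
  | Cup t1 t2 => fun x y => interp M t1 x y \/ interp M t2 x y
  | Cap t1 t2 => fun x y => interp M t1 x y /\ interp M t2 x y
  | Compl t1 => fun x y => ~ interp M t1 x y
  | Id => fun x y => x = y
  | Di => fun x y => x <> y
  | Comp t1 t2 => fun x y => exists z, interp M t1 x z /\ interp M t2 z y
  | Dag t1 t2 => fun x y => forall z, interp M t1 x z \/ interp M t2 z y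
  | Perm p t1 => fun x1 x2 =>
      interp M t1 (pair_env x1 x2 (p one)) (pair_env x1 x2 (p two))
  end.

Definition REL_ge3 {V : Type} (M : structure V) : Prop :=
  exists x y z : car M, x <> y /\ y <> z /\ x <> z.

Definition equiv_REL3 {V : Type} (t s : term V) : Prop :=
  forall M : structure V, REL_ge3 M ->
    forall x y : car M, interp M t x y <-> interp M s x y.

Fixpoint var_free {V : Type} (t : term V) : Prop :=
  match t with
  | Var _ => False
  | Bot | Top | Id | Di => True
  | Cup t1 t2 | Cap t1 t2 | Comp t1 t2 | Dag t1 t2 => var_free t1 /\ var_free t2
  | Compl t1 | Perm _ t1 => var_free t1
  end.

Definition cls {V : Type} (t : term V) : term V -> Prop :=
  fun s => var_free s /\ equiv_REL3 s t.

Definition in_quotient {V : Type} (C : term V -> Prop) : Prop :=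
  exists t, var_free t /\ C = cls t.

(* On a carrier with at least three points, every variable-free term denotes
   one of the four Boolean combinations of the diagonal and its complement:
   the empty relation, I, D or the full relation.  These four relations are
   closed under all operations of the calculus; the only non-trivial case is
   composition, where D . D is the full relation because any two points x, y
   have a common third point z distinct from both.  Dagger is the De Morgan
   dual of composition. *)

From Stdlib Require Import List Setoid Bool Classical FunctionalExtensionality
  PropExtensionality.

Definition diag_rel {X : Type} (c : bool * bool) (x y : X) : Prop :=
  (x = y /\ fst c = true) \/ (x <> y /\ snd c = true).

Definition compl_code (p : bool * bool) : bool * bool := (negb (fst p), negb (snd p)).

Definition comp_code (p q : bool * bool) : bool * bool :=
  let (a, b) := p in let (c, d) := q in
  (a && c || b && d, a && d || b && c || b && d).

Definition dag_code (p q : bool * bool) : bool * bool :=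
  compl_code (comp_code (compl_code p) (compl_code q)).

Definition perm_code (f : idx2 -> idx2) (p : bool * bool) : bool * bool :=
  match f one, f two with
  | one, one | two, two => (fst p, fst p)
  | _, _ => p
  end.

Fixpoint code {V : Type} (t : term V) : bool * bool :=
  match t with
  | Var _ | Bot => (false, false)
  | Top => (true, true)
  | Id => (true, false)
  | Di => (false, true)
  | Cup t1 t2 => (fst (code t1) || fst (code t2), snd (code t1) || snd (code t2))
  | Cap t1 t2 => (fst (code t1) && fst (code t2), snd (code t1) && snd (code t2))
  | Compl t1 => compl_code (code t1)
  | Comp t1 t2 => comp_code (code t1) (code t2)
  | Dag t1 t2 => dag_code (code t1) (code t2)
  | Perm f t1 => perm_code f (code t1)
  end.

Definition code_term {V : Type} (c : bool * bool) : term V :=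
  match c with
  | (false, false) => Bot
  | (true, false) => Id
  | (false, true) => Di
  | (true, true) => Top
  end.

Section DiagRel.

Variable X : Type.

Lemma diag_rel_compl (p : bool * bool) (x y : X) :
  ~ diag_rel p x y <-> diag_rel (compl_code p) x y.
Proof.
  destruct p as [[|] [|]]; unfold diag_rel; simpl;
    destruct (classic (x = y)); intuition congruence.
Qed.

Lemma diag_rel_cup (p q : bool * bool) (x y : X) :
  diag_rel p x y \/ diag_rel q x y <->
  diag_rel (fst p || fst q, snd p || snd q) x y.
Proof.
  destruct p as [[|] [|]], q as [[|] [|]]; unfold diag_rel; simpl;
    intuition congruence.
Qed.

Lemma diag_rel_cap (p q : bool * bool) (x y : X) :
  diag_rel p x y /\ diag_rel q x y <->
  diag_rel (fst p && fst q, snd p && snd q) x y.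
Proof.
  destruct p as [[|] [|]], q as [[|] [|]]; unfold diag_rel; simpl;
    intuition congruence.
Qed.

Lemma diag_rel_perm (f : idx2 -> idx2) (p : bool * bool) (x y : X) :
  diag_rel p (pair_env x y (f one)) (pair_env x y (f two)) <->
  diag_rel (perm_code f p) x y.
Proof.
  unfold perm_code, diag_rel;
    destruct (f one), (f two), p as [a b]; simpl;
    destruct (classic (x = y)); intuition congruence.
Qed.

Hypothesis three_points : exists x y z : X, x <> y /\ y <> z /\ x <> z.

Lemma exists_third_point (x y : X) : exists z, z <> x /\ z <> y.
Proof.
  destruct three_points as [p [q [r [Hpq [Hqr Hpr]]]]].
  destruct (classic (p = x)), (classic (p = y)); try (exists p; tauto);
  destruct (classic (q = x)), (classic (q = y)); try (exists q; tauto);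
  exists r; split; congruence.
Qed.

Lemma diag_rel_comp (p q : bool * bool) (x y : X) :
  (exists z, diag_rel p x z /\ diag_rel q z y) <-> diag_rel (comp_code p q) x y.
Proof.
  destruct p as [a b], q as [c d]; unfold comp_code, diag_rel; simpl; split.
  - intros [z Hz].
    destruct (classic (x = y)), (classic (x = z)), (classic (z = y)),
      a, b, c, d; simpl in *; intuition congruence.
  - (* a witness can always be found among x, y and a point distinct from both *)
    destruct (exists_third_point x y) as [z [Hzx Hzy]].
    destruct (classic (x = y)), a, b, c, d; simpl; intros Hxy;
      solve [ exists x; intuition congruence
            | exists y; intuition congruence
            | exists z; intuition congruence
            | intuition congruence ].
Qed.

Lemma diag_rel_dag (p q : bool * bool) (x y : X) :
  (forall z, diag_rel p x z \/ diag_rel q z y) <-> diag_rel (dag_code p q) x y.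
Proof.
  unfold dag_code; rewrite <- diag_rel_compl, <- diag_rel_comp.
  setoid_rewrite <- diag_rel_compl.
  split.
  - intros H [z [Hp Hq]]; destruct (H z); contradiction.
  - intros H z; apply NNPP; intros Hz; apply H; exists z; tauto.
Qed.

End DiagRel.

Lemma interp_var_free {V : Type} (M : structure V) (HM : REL_ge3 M) (t : term V) :
  var_free t -> forall x y, interp M t x y <-> diag_rel (code t) x y.
Proof.
  induction t as [v | | | t1 IH1 t2 IH2 | t1 IH1 t2 IH2 | t1 IH1 | | |
                  t1 IH1 t2 IH2 | t1 IH1 t2 IH2 | f t1 IH1];
    simpl; intros Hv x y;
    try destruct Hv as [Hv1 Hv2]; unfold diag_rel; simpl.
  - contradiction.
  - intuition congruence.
  - destruct (classic (x = y)); tauto.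
  - rewrite IH1, IH2 by assumption; apply diag_rel_cup.
  - rewrite IH1, IH2 by assumption; apply diag_rel_cap.
  - rewrite IH1 by assumption; apply diag_rel_compl.
  - intuition congruence.
  - destruct (classic (x = y)); intuition.
  - setoid_rewrite IH1; [setoid_rewrite IH2 |]; try assumption.
    apply (diag_rel_comp (car M) HM).
  - setoid_rewrite IH1; [setoid_rewrite IH2 |]; try assumption.
    apply (diag_rel_dag (car M) HM).
  - rewrite IH1 by assumption; apply diag_rel_perm.
Qed.

Lemma interp_code_term {V : Type} (M : structure V) (c : bool * bool) (x y : car M) :
  interp M (code_term c) x y <-> diag_rel c x y.
Proof.
  destruct c as [[|] [|]]; unfold diag_rel; simpl;
    try (destruct (classic (x = y))); intuition congruence.
Qed.

Lemma equiv_REL3_code_term {V : Type} (t : term V) :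
  var_free t -> equiv_REL3 t (code_term (code t)).
Proof.
  intros Hv M HM x y.
  rewrite interp_code_term; exact (interp_var_free M HM t Hv x y).
Qed.

Lemma cls_equiv_REL3 {V : Type} (s t : term V) : equiv_REL3 s t -> cls s = cls t.
Proof.
  intros Hst; extensionality u; apply propositional_extensionality.
  unfold cls, equiv_REL3 in *; split; intros [Hv Hu]; split; try assumption;
    intros M HM x y; rewrite (Hu M HM), (Hst M HM); reflexivity.
Qed.

Theorem lemma4p3 (V : Type)
  (HVfin : exists l : list V, forall v : V, In v l)
  (HVne : inhabited V) :
  forall C : term V -> Prop,
    in_quotient C <->
    (C = cls Bot \/ C = cls Top \/ C = cls Id \/ C = cls Di).
Proof.
  (* finiteness and non-emptiness of V are irrelevant for variable-free terms *)
  intros C; split.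
  - intros [t [Hv ->]].
    rewrite (cls_equiv_REL3 t _ (equiv_REL3_code_term t Hv)).
    destruct (code t) as [[|] [|]]; simpl; tauto.
  - intros [-> | [-> | [-> | ->]]]; eexists; (split; [| reflexivity]); exact I.
Qed.
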